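(* Fix a center $c$ and bandwidth $r>0$, and let $(p^*,q^* )\in(0,1)^2$ maximize $\ell(p,q,K_{c,r})$ over $[0,1]^2$ with finite value. Then, treating $p=p^*,q=q^*,c$ as fixed and differentiating only through the bandwidth, \[ \Big|\frac{\partial}{\partial r}\ell(p^*,q^*,K_{c,r})\Big|\le\frac{4}{e\,r}. \]
   Context: $B\subset\mathbb{R}^d$ finite nonempty, $m:B\to\{0,1\}$, $M=\{x\in B:m(x)=1\}$. $K_{c,r}(x)=\exp(-\|x-c\|^2/r^2)$. For $p,q\in[0,1]$ and $K:B\to[0,1]$: $g(x)=pK(x)+q(1-K(x))$, $\ell(p,q,K)=\frac{1}{|B|}\big(\sum_{x\in M}\log g(x)+\sum_{x\in B\setminus M}\log(1-g(x))\big)$. *)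

From Stdlib Require Import Reals List.
Import ListNotations.
Open Scope R_scope.

(* Points of R^d are represented as lists of reals of length d. *)
Definition point := list R.

Definition sqdist (x c : point) : R :=
  fold_right Rplus 0 (map (fun ab => (fst ab - snd ab)^2) (combine x c)).

Definition Kgauss (c : point) (r : R) (x : point) : R :=
  exp (- sqdist x c / r^2).

Definition gmix (p q : R) (K : point -> R) (x : point) : R :=
  p * K x + q * (1 - K x).

(* sum over the finite set B (a duplicate-free list) *)
Definition sumB (B : list point) (f : point -> R) : R :=
  fold_right Rplus 0 (map f B).

(* l(p,q,K) = 1/|B| ( sum_{x in M} log g(x) + sum_{x in B\M} log(1 - g(x)) ),
   with M = {x in B | m x = true}.  Stdlib's ln is total, so this is the
   correct value exactly when [ell_finite] holds. *)
Definition ell (B : list point) (m : point -> bool) (p q : R) (K : point -> R) : R :=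
  / INR (length B) *
  sumB B (fun x => if m x then ln (gmix p q K x) else ln (1 - gmix p q K x)).

Definition ell_finite (B : list point) (m : point -> bool) (p q : R) (K : point -> R) : Prop :=
  forall x, In x B -> if m x then 0 < gmix p q K x else 0 < 1 - gmix p q K x.

From Stdlib Require Import Reals List Lra Lia.
Open Scope R_scope.

(* Write l = (1/N) sum_x T(m x, g x) with T(true,y) = ln y, T(false,y) = ln (1-y),
   and let S(b,y) = dT/dy be the slope of the log term, so |S(true,y)| = 1/y and
   |S(false,y)| = 1/(1-y).
   1. Optimality of (ps,qs) along the homothety (p,q) -> (1-t)(a,a) + t(ps,qs)
      towards a corner (a,a) of the square gives, from the left derivative at
      t = 1, the first-order condition  sum_x S(m x, g x) (g x - a) >= 0.
   2. Adding the conditions for a = 0 and a = 1 yields sum_x |S(m x, g x)| <= 2N,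
      because S(b,y) y + S(b,y) (y-1) + |S(b,y)| = 2 pointwise.
   3. The chain rule gives dl/dr = (1/N) sum_x S(m x, g x) (ps - qs) dK/dr, and
      |dK/dr| = (2/r) a e^{-a} <= 2/(e r) with a = ||x-c||^2/r^2.
   Combining 2 and 3 bounds the derivative by (1/N) * 2N * 2/(e r). *)

Lemma derivable_pt_lim_eq f x l l' :
  derivable_pt_lim f x l -> l = l' -> derivable_pt_lim f x l'.
Proof. intros H ->; exact H. Qed.

Lemma derivable_pt_lim_ext f g x l :
  (forall s, f s = g s) -> derivable_pt_lim f x l -> derivable_pt_lim g x l.
Proof.
  intros Hfg D eps Heps; destruct (D eps Heps) as [del Hdel]; exists del.
  intros h Hh Hhdel; rewrite <- !Hfg; auto.
Qed.

Lemma derivable_pt_lim_affine_comp a b f x l :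
  derivable_pt_lim f x l -> derivable_pt_lim (fun s => a + b * f s) x (b * l).
Proof.
  intros H; eapply derivable_pt_lim_eq.
  - exact (derivable_pt_lim_plus (fct_cte a) (mult_real_fct b f) x 0 (b * l)
             (derivable_pt_lim_const a x) (derivable_pt_lim_scal f b x l H)).
  - ring.
Qed.

Lemma derivable_pt_lim_ln_comp f x l :
  derivable_pt_lim f x l -> 0 < f x -> derivable_pt_lim (fun s => ln (f s)) x (l / f x).
Proof.
  intros H Hpos; eapply derivable_pt_lim_eq.
  - exact (derivable_pt_lim_comp f ln x l (/ f x) H (derivable_pt_lim_ln _ Hpos)).
  - unfold Rdiv; ring.
Qed.

Lemma derivative_nonneg_at_left_max (phi : R -> R) a b l :
  a < b -> derivable_pt_lim phi b l ->
  (forall t, a < t < b -> phi t <= phi b) -> 0 <= l.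
Proof.
  intros Hab D Hmax; destruct (Rle_or_lt 0 l) as [|Hl]; [assumption|exfalso].
  destruct (D (- l) ltac:(lra)) as [del Hdel].
  pose proof (cond_pos del) as Hdel0.
  set (e := Rmin (del / 2) ((b - a) / 2)).
  assert (He : 0 < e <= del / 2 /\ e <= (b - a) / 2).
  { unfold e; repeat split; [apply Rmin_pos; lra | apply Rmin_l | apply Rmin_r]. }
  assert (Hh : Rabs (- e) < del) by (rewrite Rabs_Ropp, Rabs_pos_eq; lra).
  specialize (Hdel (- e) ltac:(lra) Hh).
  assert (Hle : phi (b + - e) <= phi b) by (apply Hmax; lra).
  assert (Hquot : 0 <= (phi (b + - e) - phi b) / - e).
  { unfold Rdiv; rewrite Rinv_opp.
    pose proof (Rinv_0_lt_compat e ltac:(lra)); nra. }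
  rewrite Rabs_pos_eq in Hdel by lra; lra.
Qed.

(* x e^{-x} <= 1/e for every real x, from e^{x-1} >= x. *)
Lemma mul_exp_neg_le_inv_e a : a * exp (- a) <= / exp 1.
Proof.
  pose proof (exp_ineq1_le (a - 1)) as Hineq.
  assert (E : exp (a - 1) * exp (- a) = / exp 1).
  { rewrite <- exp_plus, <- exp_Ropp; f_equal; ring. }
  pose proof (exp_pos (- a)); nra.
Qed.

Lemma sumB_ext B f g : (forall x, In x B -> f x = g x) -> sumB B f = sumB B g.
Proof.
  induction B as [|a B IH]; intros H; unfold sumB in *; simpl; [reflexivity|].
  rewrite (H a (or_introl eq_refl)), IH; [reflexivity|].
  intros x Hx; apply H; right; exact Hx.
Qed.

Lemma sumB_le B f g : (forall x, In x B -> f x <= g x) -> sumB B f <= sumB B g.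
Proof.
  induction B as [|a B IH]; intros H; unfold sumB in *; simpl; [lra|].
  apply Rplus_le_compat; [apply H; left; reflexivity|].
  apply IH; intros x Hx; apply H; right; exact Hx.
Qed.

Lemma sumB_plus B f g : sumB B (fun x => f x + g x) = sumB B f + sumB B g.
Proof. induction B as [|a B IH]; unfold sumB in *; simpl; [ring|]; rewrite IH; ring. Qed.

Lemma sumB_scal B a f : sumB B (fun x => a * f x) = a * sumB B f.
Proof. induction B as [|b B IH]; unfold sumB in *; simpl; [ring|]; rewrite IH; ring. Qed.

Lemma sumB_const B a : sumB B (fun _ => a) = INR (length B) * a.
Proof.
  induction B as [|b B IH]; [unfold sumB; simpl; ring|].
  change (a + sumB B (fun _ => a) = INR (S (length B)) * a); rewrite IH, S_INR; ring.
Qed.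

Lemma sumB_abs B f : Rabs (sumB B f) <= sumB B (fun x => Rabs (f x)).
Proof.
  induction B as [|a B IH]; unfold sumB in *; simpl.
  - rewrite Rabs_R0; lra.
  - eapply Rle_trans; [apply Rabs_triang | lra].
Qed.

Lemma sumB_nonneg_of_mean B f : 0 <= / INR (length B) * sumB B f -> 0 <= sumB B f.
Proof.
  destruct B as [|b B]; intros H; [unfold sumB; simpl; lra|].
  assert (HN : 0 < INR (length (b :: B))) by (apply lt_0_INR; simpl; lia).
  pose proof (Rinv_0_lt_compat _ HN).
  destruct (Rle_or_lt 0 (sumB (b :: B) f)); [assumption | nra].
Qed.

Lemma sumB_deriv (B : list point) (F : point -> R -> R) (F' : point -> R) t :
  (forall x, In x B -> derivable_pt_lim (F x) t (F' x)) ->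
  derivable_pt_lim (fun s => sumB B (fun x => F x s)) t (sumB B F').
Proof.
  induction B as [|a B IH]; intros H; unfold sumB; simpl.
  - exact (derivable_pt_lim_const 0 t).
  - exact (derivable_pt_lim_plus (F a) (fun s => sumB B (fun x => F x s)) t _ _
             (H a (or_introl eq_refl)) (IH (fun x Hx => H x (or_intror Hx)))).
Qed.

Lemma weighted_mean_bound B f h C :
  B <> nil -> (forall x, In x B -> Rabs (h x) <= C) ->
  sumB B (fun x => Rabs (f x)) <= 2 * INR (length B) ->
  Rabs (/ INR (length B) * sumB B (fun x => f x * h x)) <= 2 * C.
Proof.
  intros HB Hh Hf.
  assert (HN : 0 < INR (length B)) by (destruct B; [congruence | apply lt_0_INR; simpl; lia]).
  assert (HC : 0 <= C).
  { destruct B as [|b B]; [congruence|].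
    pose proof (Hh b (or_introl eq_refl)); pose proof (Rabs_pos (h b)); lra. }
  assert (Hsum : sumB B (fun x => Rabs (f x * h x)) <= C * sumB B (fun x => Rabs (f x))).
  { rewrite <- sumB_scal; apply sumB_le; intros x Hx.
    rewrite Rabs_mult; pose proof (Hh x Hx); pose proof (Rabs_pos (f x)); nra. }
  pose proof (sumB_abs B (fun x => f x * h x)).
  rewrite Rabs_mult, Rabs_pos_eq by (left; apply Rinv_0_lt_compat; lra).
  apply (Rmult_le_reg_l (INR (length B))); [assumption|].
  rewrite <- Rmult_assoc, Rinv_r, Rmult_1_l by lra; nra.
Qed.

Definition loglik_term (b : bool) (y : R) : R := if b then ln y else ln (1 - y).
Definition loglik_slope (b : bool) (y : R) : R := if b then / y else - / (1 - y).

Lemma loglik_term_deriv b f t l :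
  0 < f t < 1 -> derivable_pt_lim f t l ->
  derivable_pt_lim (fun s => loglik_term b (f s)) t (loglik_slope b (f t) * l).
Proof.
  intros Hf D; destruct b; simpl.
  - eapply derivable_pt_lim_eq; [apply derivable_pt_lim_ln_comp; [exact D | lra]|].
    unfold Rdiv; ring.
  - eapply derivable_pt_lim_eq.
    + apply (derivable_pt_lim_ln_comp (fun s => 1 - f s)); [|lra].
      apply (derivable_pt_lim_ext (fun s => 1 + -1 * f s)); [intros s; ring|].
      exact (derivable_pt_lim_affine_comp 1 (-1) f t l D).
    + cbv beta; field; lra.
Qed.

Lemma loglik_slope_corner_identity b y :
  0 < y < 1 -> loglik_slope b y * (y - 0) + loglik_slope b y * (y - 1)
               + Rabs (loglik_slope b y) = 2.
Proof.
  intros Hy; destruct b; simpl.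
  - rewrite Rabs_pos_eq by (left; apply Rinv_0_lt_compat; lra); field; lra.
  - rewrite Rabs_Ropp, Rabs_pos_eq by (left; apply Rinv_0_lt_compat; lra); field; lra.
Qed.

Lemma gmix_open_unit p q K x :
  0 < p < 1 -> 0 < q < 1 -> 0 <= K x <= 1 -> 0 < gmix p q K x < 1.
Proof.
  intros Hp Hq HK; unfold gmix.
  destruct (Rle_lt_dec p q); split; nra.
Qed.

Lemma gmix_homothety a t p q K x :
  gmix ((1 - t) * a + t * p) ((1 - t) * a + t * q) K x = (1 - t) * a + t * gmix p q K x.
Proof. unfold gmix; ring. Qed.

Section FirstOrder.

Variables (B : list point) (m : point -> bool) (K : point -> R) (ps qs : R).
Hypothesis K_range : forall x, 0 <= K x <= 1.
Hypothesis ps_range : 0 < ps < 1.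
Hypothesis qs_range : 0 < qs < 1.
Hypothesis ps_qs_max : forall p q, 0 <= p <= 1 -> 0 <= q <= 1 -> ell_finite B m p q K ->
  ell B m p q K <= ell B m ps qs K.

(* First-order condition along the homothety towards the corner (a,a):
   the likelihood cannot increase by moving (ps,qs) towards the corner. *)
Lemma homothety_condition a : 0 <= a <= 1 ->
  0 <= sumB B (fun x => loglik_slope (m x) (gmix ps qs K x) * (gmix ps qs K x - a)).
Proof.
  intros Ha; apply sumB_nonneg_of_mean.
  set (path := fun t => ell B m ((1 - t) * a + t * ps) ((1 - t) * a + t * qs) K).
  apply (derivative_nonneg_at_left_max path 0 1); [lra| |].
  - apply derivable_pt_lim_scal, (sumB_deriv B (fun x t =>
      loglik_term (m x) (gmix ((1 - t) * a + t * ps) ((1 - t) * a + t * qs) K x))).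
    intros x _; pose proof (gmix_open_unit ps qs K x ps_range qs_range (K_range x)).
    eapply derivable_pt_lim_eq; [apply (loglik_term_deriv _ _ _ (gmix ps qs K x - a))|].
    + rewrite gmix_homothety; lra.
    + apply (derivable_pt_lim_ext (fun t => a + (gmix ps qs K x - a) * t)).
      { intros t; rewrite gmix_homothety; ring. }
      eapply derivable_pt_lim_eq;
        [apply derivable_pt_lim_affine_comp, derivable_pt_lim_id | ring].
    + cbv beta; rewrite gmix_homothety; repeat f_equal; ring.
  - intros t Ht; unfold path.
    replace ((1 - 1) * a + 1 * ps) with ps by ring.
    replace ((1 - 1) * a + 1 * qs) with qs by ring.
    apply ps_qs_max; try (split; nra).
    intros x _; rewrite gmix_homothety.
    pose proof (gmix_open_unit ps qs K x ps_range qs_range (K_range x)).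
    destruct (m x); nra.
Qed.

(* The conditions for the corners (0,0) and (1,1) together bound the
   total absolute slope by 2N. *)
Lemma loglik_slope_abs_sum_bound :
  sumB B (fun x => Rabs (loglik_slope (m x) (gmix ps qs K x))) <= 2 * INR (length B).
Proof.
  pose proof (homothety_condition 0 ltac:(lra)) as H0.
  pose proof (homothety_condition 1 ltac:(lra)) as H1.
  assert (E : sumB B (fun x => (loglik_slope (m x) (gmix ps qs K x) * (gmix ps qs K x - 0)
                  + loglik_slope (m x) (gmix ps qs K x) * (gmix ps qs K x - 1))
                  + Rabs (loglik_slope (m x) (gmix ps qs K x)))
              = sumB B (fun _ => 2)).
  { apply sumB_ext; intros x _; apply loglik_slope_corner_identity.
    exact (gmix_open_unit ps qs K x ps_range qs_range (K_range x)). }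
  rewrite !sumB_plus, sumB_const in E; lra.
Qed.

End FirstOrder.

Lemma sqdist_nonneg x c : 0 <= sqdist x c.
Proof.
  unfold sqdist; generalize (combine x c) as l.
  induction l as [|ab l IH]; cbn [fold_right map]; [lra|].
  pose proof (pow2_ge_0 (fst ab - snd ab)); lra.
Qed.

Lemma Kgauss_range c r x : 0 < r -> 0 <= Kgauss c r x <= 1.
Proof.
  intros Hr; unfold Kgauss; split; [left; apply exp_pos|].
  assert (Hexp : - sqdist x c / r ^ 2 <= 0).
  { pose proof (sqdist_nonneg x c); pose proof (pow_lt r 2 Hr).
    unfold Rdiv; pose proof (Rinv_0_lt_compat (r ^ 2) ltac:(assumption)); nra. }
  rewrite <- exp_0; destruct (Rle_lt_or_eq_dec _ _ Hexp) as [Hlt | ->];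
    [left; apply exp_increasing, Hlt | right; reflexivity].
Qed.

Definition Kgauss_dr (c : point) (r : R) (x : point) : R :=
  Kgauss c r x * (2 * sqdist x c / r ^ 3).

Lemma Kgauss_deriv_bandwidth c r x :
  0 < r -> derivable_pt_lim (fun s => Kgauss c s x) r (Kgauss_dr c r x).
Proof.
  intros Hr; unfold Kgauss_dr, Kgauss.
  assert (Hexp : derivable_pt_lim (fun s => - sqdist x c / s ^ 2) r (2 * sqdist x c / r ^ 3)).
  { eapply derivable_pt_lim_eq.
    - exact (derivable_pt_lim_div (fct_cte (- sqdist x c)) (fun y => y ^ 2) r 0 _
               (derivable_pt_lim_const _ r) (derivable_pt_lim_pow r 2)
               ltac:(apply pow_nonzero; lra)).
    - unfold fct_cte, Rsqr; simpl; field; lra. }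
  exact (derivable_pt_lim_comp _ exp r _ _ Hexp (derivable_pt_lim_exp _)).
Qed.

(* |dK/dr| = (2/r) a e^{-a} with a = ||x-c||^2/r^2, hence at most 2/(e r). *)
Lemma Kgauss_dr_bound c r x : 0 < r -> Rabs (Kgauss_dr c r x) <= 2 / (exp 1 * r).
Proof.
  intros Hr; set (a := sqdist x c / r ^ 2).
  pose proof (sqdist_nonneg x c); pose proof (pow_lt r 2 Hr); pose proof (exp_pos 1).
  assert (Ha : 0 <= a) by (unfold a, Rdiv; apply Rmult_le_pos; [lra | left; apply Rinv_0_lt_compat; lra]).
  assert (E : Kgauss_dr c r x = 2 / r * (a * exp (- a))).
  { unfold Kgauss_dr, Kgauss, a.
    replace (- (sqdist x c / r ^ 2)) with (- sqdist x c / r ^ 2) by (field; lra).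
    field; lra. }
  pose proof (exp_pos (- a)); pose proof (mul_exp_neg_le_inv_e a).
  assert (H2r : 0 < 2 / r) by (unfold Rdiv; apply Rmult_lt_0_compat; [lra | apply Rinv_0_lt_compat; lra]).
  rewrite E, Rabs_pos_eq by (apply Rmult_le_pos; nra).
  replace (2 / (exp 1 * r)) with (2 / r * / exp 1) by (field; lra).
  apply Rmult_le_compat_l; lra.
Qed.

Lemma ell_bandwidth_deriv B m c r ps qs :
  0 < r -> 0 < ps < 1 -> 0 < qs < 1 ->
  derivable_pt_lim (fun s => ell B m ps qs (Kgauss c s)) r
    (/ INR (length B) * sumB B (fun x =>
       loglik_slope (m x) (gmix ps qs (Kgauss c r) x) * ((ps - qs) * Kgauss_dr c r x))).
Proof.
  intros Hr Hp Hq.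
  apply derivable_pt_lim_scal,
    (sumB_deriv B (fun x s => loglik_term (m x) (gmix ps qs (Kgauss c s) x))).
  intros x _; apply (loglik_term_deriv (m x) (fun s => gmix ps qs (Kgauss c s) x)).
  - exact (gmix_open_unit ps qs _ x Hp Hq (Kgauss_range c r x Hr)).
  - apply (derivable_pt_lim_ext (fun s => qs + (ps - qs) * Kgauss c s x)).
    { intros s; unfold gmix; ring. }
    exact (derivable_pt_lim_affine_comp _ _ _ _ _ (Kgauss_deriv_bandwidth c r x Hr)).
Qed.

Theorem lemmaA6 (d : nat) (B : list point) (m : point -> bool) (c : point) (r ps qs : R) :
  B <> nil -> NoDup B -> (forall x, In x B -> length x = d) -> length c = d ->
  0 < r ->
  0 < ps < 1 -> 0 < qs < 1 ->
  ell_finite B m ps qs (Kgauss c r) ->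
  (forall p q, 0 <= p <= 1 -> 0 <= q <= 1 -> ell_finite B m p q (Kgauss c r) ->
     ell B m p q (Kgauss c r) <= ell B m ps qs (Kgauss c r)) ->
  exists D, derivable_pt_lim (fun s => ell B m ps qs (Kgauss c s)) r D /\
            Rabs D <= 4 / (exp 1 * r).
Proof.
  intros HB _ _ _ Hr Hp Hq _ Hmax.
  eexists; split; [exact (ell_bandwidth_deriv B m c r ps qs Hr Hp Hq)|].
  replace (4 / (exp 1 * r)) with (2 * (2 / (exp 1 * r)))
    by (pose proof (exp_pos 1); field; lra).
  apply weighted_mean_bound; [exact HB | |].
  - intros x _; rewrite Rabs_mult.
    assert (Hpq : Rabs (ps - qs) <= 1) by (apply Rabs_le; lra).
    pose proof (Kgauss_dr_bound c r x Hr); pose proof (Rabs_pos (Kgauss_dr c r x));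
      pose proof (Rabs_pos (ps - qs)); nra.
  - exact (loglik_slope_abs_sum_bound B m _ ps qs (fun x => Kgauss_range c r x Hr) Hp Hq Hmax).
Qed.
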